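(* For every $s \in \mathcal{S}$, $r(s) \equiv s(0) \pmod 2$.
   Context: For a step function $s$ on $[0,\tfrac12)$ let $J_s(t)=\tfrac12(\lim_{\tau\downarrow t}s(\tau)-\lim_{\tau\uparrow t}s(\tau))$. A Laurent polynomial $\delta\in\mathbf{Q}[t,t^{-1}]$ is symmetric if $\delta(t^{-1})=\delta(t)$. $\mathcal{S}$ is the set of integer-valued step functions $s$ on $[0,\tfrac12)$ such that: (1) $s$ has finitely many discontinuities and is continuous at $0$; (2) for all $t$, $s(t)=\tfrac12(\lim_{\tau\downarrow t}s(\tau)+\lim_{\tau\uparrow t}s(\tau))$; (3) $J_s(t)\in\mathbf{Z}$ for all $t$; (4) if $J_s(t)\neq0$ then $e^{2\pi i t}$ is a root of an irreducible symmetric rational polynomial; (5) if $\delta(e^{2\pi i\alpha_1})=\delta(e^{2\pi i\alpha_2})=0$ for some symmetric irreducible rational polynomial $\delta$, then $J_s(\alpha_1)\equiv J_s(\alpha_2)\pmod 2$. For $s\in\mathcal{S}$: $T_s=\{t: J_s(t)\neq0\}$; $T_{s,\delta}=\{t\in T_s:\delta(e^{2\pi i t})=0\}$; $r_\delta(s)=\max_{t\in T_{s,\delta}}|s(t)|+\max_{t\in T_{s,\delta}}|J_s(t)|$ (for $T_{s,\delta}\ne\emptyset$); $r(s)=\max\big(\{r_\delta(s)\}_\delta\cup\{s(0)\}\big)$. *)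

From HB Require Import structures.
From mathcomp Require Import all_boot all_order all_algebra.
From mathcomp Require Import all_classical all_reals all_analysis.
From mathcomp Require Import complex.
Set Implicit Arguments. Unset Strict Implicit. Unset Printing Implicit Defensive.
Import Order.TTheory GRing.Theory Num.Theory.
Import numFieldNormedType.Exports.
Local Open Scope classical_set_scope.
Local Open Scope ring_scope.

Definition laurent := (nat * {poly rat})%type.
Definition lp_eq (d e : laurent) : Prop := d.2 * 'X^(e.1) = e.2 * 'X^(d.1).
Definition lp_mul (d e : laurent) : laurent := ((d.1 + e.1)%N, d.2 * e.2).
Definition lp_inv (d : laurent) : laurent :=
  ((size d.2).-1, 'X^(d.1) * \poly_(i < size d.2) d.2`_((size d.2).-1 - i)).
Definition lp_symmetric (d : laurent) : Prop := lp_eq (lp_inv d) d.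
Definition lp_unit (d : laurent) : Prop :=
  exists (c : rat) (m : nat), c != 0 /\ d.2 = c *: 'X^m.
Definition lp_irreducible (d : laurent) : Prop :=
  d.2 != 0 /\ ~ lp_unit d /\
  forall a b : laurent, lp_eq d (lp_mul a b) -> lp_unit a \/ lp_unit b.
Definition lp_eval (R : realType) (d : laurent) (z : complex.complex R) : complex.complex R :=
  (map_poly ratr d.2).[z] / z ^+ (d.1).
Definition expi2pi (R : realType) (t : R) : complex.complex R :=
  complex.Complex (cos (2 * pi * t)) (sin (2 * pi * t)).

Definition rlimit (R : realType) (s : R -> R) (t : R) : R := lim (s x @[x --> t^'+]).
Definition llimit (R : realType) (s : R -> R) (t : R) : R := lim (s x @[x --> t^'-]).
Definition J (R : realType) (s : R -> R) (t : R) : R := (rlimit s t - llimit s t) / 2.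

Definition is_integer (R : realType) (x : R) : Prop := exists z : int, x = z%:~R.
Definition congr_mod2 (R : realType) (x y : R) : Prop :=
  exists k : int, x - y = (2 * k)%:~R.

Definition is_step_function (R : realType) (s : R -> R) : Prop :=
  exists a : seq R,
    let b := 0 :: rcons a (1 / 2) in
    sorted <%R b /\
    forall i : nat, (i.+1 < size b)%N ->
      forall x y : R, b`_i < x < b`_i.+1 -> b`_i < y < b`_i.+1 -> s x = s y.

Definition sym_irred (d : laurent) : Prop := lp_symmetric d /\ lp_irreducible d.

Definition in_S (R : realType) (s : R -> R) : Prop :=
  [/\ is_step_function s /\ (forall t : R, 0 <= t < 1 / 2 -> is_integer (s t))
        /\ (s x @[x --> 0^'+] --> s 0),
      (forall t : R, 0 < t < 1 / 2 -> s t = (rlimit s t + llimit s t) / 2),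
      (forall t : R, 0 < t < 1 / 2 -> is_integer (J s t)),
      (forall t : R, 0 < t < 1 / 2 -> J s t != 0 ->
                   exists d : laurent, sym_irred d /\ lp_eval d (expi2pi t) = 0) &
      (forall (d : laurent) (a1 a2 : R), sym_irred d ->
                   0 < a1 < 1 / 2 -> 0 < a2 < 1 / 2 ->
                   lp_eval d (expi2pi a1) = 0 -> lp_eval d (expi2pi a2) = 0 ->
                   congr_mod2 (J s a1) (J s a2))].

Definition T_s (R : realType) (s : R -> R) : set R :=
  [set t | 0 < t < 1 / 2 /\ J s t != 0].
Definition T_sd (R : realType) (s : R -> R) (d : laurent) : set R :=
  [set t | T_s s t /\ lp_eval d (expi2pi t) = 0].

(* r_delta(s) = max_{t in T_{s,delta}} |s(t)| + max_{t in T_{s,delta}} |J_s(t)|;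
   the maxima are over finite sets, rendered as suprema *)
Definition r_delta (R : realType) (s : R -> R) (d : laurent) : R :=
  sup [set `|s t| | t in T_sd s d] + sup [set `|J s t| | t in T_sd s d].

Definition r_of (R : realType) (s : R -> R) : R :=
  sup ([set r_delta s d | d in [set d | sym_irred d /\ T_sd s d !=set0]]
       `|` [set s 0]).

From HB Require Import structures.
From mathcomp Require Import all_boot all_order all_algebra.
From mathcomp Require Import all_classical all_reals all_analysis.
From mathcomp Require Import complex.
From mathcomp Require Import lra.
Import Order.TTheory GRing.Theory Num.Theory.
Import numFieldNormedType.Exports.
Local Open Scope classical_set_scope.
Local Open Scope ring_scope.

(* Condition (2) makes the value of s at a breakpoint t the average of its
   one-sided limits, so s(t) = s(t-) + J(t) and s(t+) = s(t-) + 2 J(t); with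
   continuity at 0 this gives s(t) = s(0) + J(t) (mod 2) on (0, 1/2).  The
   maxima defining r_delta(s) are attained at some t1, t2 in T_{s,delta}, and
   by (5) J(t2) = J(t1) (mod 2), hence
   r_delta(s) = |s(t1)| + |J(t2)| = s(0) + 2 J(t1) = s(0) (mod 2).
   Finally r(s), a maximum of finitely many values, is s(0) or some r_delta(s). *)

Section CongrMod2.
Context {R : realType}.
Implicit Types x y z u v : R.

Lemma congr_mod2_refl x : congr_mod2 x x.
Proof. by exists 0; rewrite mulr0 subrr. Qed.

Lemma congr_mod2_trans {x y z} :
  congr_mod2 x y -> congr_mod2 y z -> congr_mod2 x z.
Proof.
move=> [k Hk] [l Hl]; exists (k + l).
by rewrite intrM intrD; move: Hk Hl; rewrite !intrM; lra.
Qed.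

Lemma congr_mod2D {x y u v} :
  congr_mod2 x y -> congr_mod2 u v -> congr_mod2 (x + u) (y + v).
Proof.
move=> [k Hk] [l Hl]; exists (k + l).
by rewrite intrM intrD; move: Hk Hl; rewrite !intrM; lra.
Qed.

Lemma congr_mod2_normr x : is_integer x -> congr_mod2 `|x| x.
Proof.
move=> [z ->]; have [z_ge0|z_lt0] := leP 0 (z%:~R : R).
  by rewrite ger0_norm //; exact: congr_mod2_refl.
by exists (- z); rewrite ltr0_norm // intrM intrN; lra.
Qed.

Lemma congr_mod2_add_double x y : is_integer y -> congr_mod2 (x + y + y) x.
Proof. by move=> [z ->]; exists z; rewrite intrM; lra. Qed.

End CongrMod2.

Section FiniteSup.
Context {R : realType}.
Implicit Types E : set R.

Lemma sup_greatest E m : E m -> ubound E m -> sup E = m.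
Proof.
move=> Em ubm; apply/le_anti/andP; split.
  exact: ge_sup (ex_intro _ m Em) ubm.
exact: ub_le_sup (ex_intro _ m ubm) _ Em.
Qed.

Lemma sup_mem_finite E (l : seq R) :
  E !=set0 -> E `<=` [set` l] -> E (sup E).
Proof.
move=> [x0 Ex0] El.
pose m := \big[Num.max/x0]_(x <- l | `[< E x >]) x.
have Em : E m.
  apply: (big_ind E) => // [x y Ex Ey|x /asboolP//].
  by rewrite /Num.max; case: ifP.
rewrite (@sup_greatest E m Em) // => x Ex.
by apply: le_bigmax_seq; [exact: El | exact/asboolP].
Qed.

End FiniteSup.

Lemma exists_switch (T : Type) (x0 : T) (P : pred T) (b : seq T) :
  ~~ P (nth x0 b 0) -> has P b ->
  exists2 i, (i.+1 < size b)%N & ~~ P (nth x0 b i) && P (nth x0 b i.+1).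
Proof.
move=> nP0 hasPb; have k_lt : (find P b < size b)%N by rewrite -has_find.
have Pk := nth_find x0 hasPb.
have k_gt0 : (0 < find P b)%N.
  by rewrite lt0n; apply: contraNneq nP0 => <-.
exists (find P b).-1; rewrite prednK // Pk andbT.
by rewrite (before_find x0) // ltn_predL.
Qed.

Definition breakpoints {R : realType} (a : seq R) : seq R := 0 :: rcons a (1 / 2).

Definition piecewise_constant {R : realType} (s : R -> R) (b : seq R) : Prop :=
  forall i : nat, (i.+1 < size b)%N ->
    forall x y : R, b`_i < x < b`_i.+1 -> b`_i < y < b`_i.+1 -> s x = s y.

Section StepFunction.
Context {R : realType} {s : R -> R} {a : seq R}.
Local Notation b := (breakpoints a).
Hypothesis b_sorted : sorted <%R b.
Hypothesis s_const : piecewise_constant s b.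

Lemma size_breakpoints : size b = (size a).+2.
Proof. by rewrite /= size_rcons. Qed.

Lemma half_in_breakpoints : 1 / 2 \in b.
Proof. by rewrite inE mem_rcons inE eqxx orbT. Qed.

Lemma breakpoints_lt i j : (i < j < size b)%N -> b`_i < b`_j.
Proof.
case/andP=> ij jb; apply: (sorted_ltn_nth lt_trans) => //.
by rewrite inE (ltn_trans ij).
Qed.

Lemma breakpoint_interior i : (0 < i < (size a).+1)%N -> 0 < b`_i < 1 / 2.
Proof.
case/andP=> i_gt0 i_lt.
have -> : 1 / 2 = b`_(size a).+1 by rewrite /= nth_rcons ltnn eqxx.
by rewrite -[0]/(b`_0) !breakpoints_lt ?i_gt0 ?i_lt ?size_breakpoints //=
  (ltn_trans i_lt).
Qed.

Lemma interval_right_of t : 0 <= t < 1 / 2 ->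
  exists2 i, (i.+1 < size b)%N & b`_i <= t < b`_i.+1.
Proof.
case/andP=> t_ge0 t_lt.
have [||i ib /andP[bi_le bi1_gt]] := @exists_switch _ 0 (fun x => t < x) b.
- by rewrite /= -leNgt.
- by apply/hasP; exists (1 / 2); first exact: half_in_breakpoints.
- by exists i; rewrite // leNgt bi_le.
Qed.

Lemma interval_left_of t : 0 < t < 1 / 2 ->
  exists2 i, (i.+1 < size b)%N & b`_i < t <= b`_i.+1.
Proof.
case/andP=> t_gt0 t_lt.
have [||i ib /andP[bi_le bi1_gt]] := @exists_switch _ 0 (fun x => t <= x) b.
- by rewrite /= -ltNge.
- by apply/hasP; exists (1 / 2); [exact: half_in_breakpoints | exact: ltW].
- by exists i; rewrite // ltNge bi_le.
Qed.

Lemma midpoint_in_interval {i} : (i.+1 < size b)%N ->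
  b`_i < (b`_i + b`_i.+1) / 2 < b`_i.+1.
Proof.
move=> ib; have /midf_lt[-> ->] // : b`_i < b`_i.+1.
by rewrite breakpoints_lt ?ltnSn.
Qed.

Lemma rlimit_piecewise {i t x} : (i.+1 < size b)%N ->
  b`_i <= t < b`_i.+1 -> b`_i < x < b`_i.+1 -> rlimit s t = s x.
Proof.
move=> ib /andP[it ti] ix; apply: norm_lim_near_cst; near=> y.
apply: s_const ib _ _ _ ix; apply/andP; split.
  by apply: le_lt_trans it _; near: y; exact: nbhs_right_gt.
by near: y; exact: nbhs_right_lt.
Unshelve. all: by end_near.
Qed.

Lemma llimit_piecewise {i t x} : (i.+1 < size b)%N ->
  b`_i < t <= b`_i.+1 -> b`_i < x < b`_i.+1 -> llimit s t = s x.
Proof.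
move=> ib /andP[it ti] ix; apply: norm_lim_near_cst; near=> y.
apply: s_const ib _ _ _ ix; apply/andP; split.
  by near: y; exact: nbhs_left_gt.
by apply: lt_le_trans ti; near: y; exact: nbhs_left_lt.
Unshelve. all: by end_near.
Qed.

Hypothesis s_cont0 : s x @[x --> 0^'+] --> s 0.
Hypothesis J_int : forall t, 0 < t < 1 / 2 -> is_integer (J s t).

Lemma congr_mod2_on_interval {i x} : (i.+1 < size b)%N ->
  b`_i < x < b`_i.+1 -> congr_mod2 (s x) (s 0).
Proof.
elim: i x => [|i IH] x ib ix.
  have b1_gt0 : 0 < b`_1 by case/andP: ix; apply: lt_trans.
  rewrite -(rlimit_piecewise (t := 0) ib _ ix) ?lexx ?b1_gt0 //.
  by rewrite /rlimit (norm_cvg_lim s_cont0); exact: congr_mod2_refl.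
set t := b`_i.+1; set m := (b`_i + t) / 2.
have ib' : (i.+1 < size b)%N by apply: ltn_trans ib.
have [lt_it lt_ti2] : b`_i < t /\ t < b`_i.+2.
  by rewrite !breakpoints_lt ?ltnSn.
have left_t : llimit s t = s m.
  by apply: (llimit_piecewise ib'); rewrite ?lt_it ?lexx ?midpoint_in_interval.
have right_t : rlimit s t = s x.
  by apply: (rlimit_piecewise ib); rewrite ?lexx ?lt_ti2.
have t_interior : 0 < t < 1 / 2.
  by apply: breakpoint_interior; move: ib; rewrite size_breakpoints.
have -> : s x = s m + J s t + J s t by rewrite /J left_t right_t; lra.
apply: congr_mod2_trans (congr_mod2_add_double _ _ (J_int _ t_interior)) _.
exact/IH/midpoint_in_interval.
Qed.

Lemma jump_mem_breakpoints t : 0 < t < 1 / 2 -> J s t != 0 -> t \in b.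
Proof.
move=> /andP[t_gt0 t_lt]; apply: contraR => t_notin.
have /interval_right_of[i ib /andP[bi_le t_lt_bi1]] : 0 <= t < 1 / 2.
  by rewrite ltW.
have bi_lt : b`_i < t.
  rewrite lt_neqAle bi_le andbT; apply: contraNneq t_notin => <-.
  by rewrite mem_nth // (ltn_trans _ ib).
have mid := midpoint_in_interval ib.
rewrite /J (llimit_piecewise ib _ mid) ?bi_lt ?(ltW t_lt_bi1) //.
by rewrite (rlimit_piecewise ib _ mid) ?bi_le ?t_lt_bi1 // subrr mul0r.
Qed.

Hypothesis s_average :
  forall t, 0 < t < 1 / 2 -> s t = (rlimit s t + llimit s t) / 2.

Lemma congr_mod2_value_jump t : 0 < t < 1 / 2 ->
  congr_mod2 (s t) (s 0 + J s t).
Proof.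
move=> t_interior; have [i ib t_in] := interval_left_of _ t_interior.
have mid := midpoint_in_interval ib.
have -> : s t = s ((b`_i + b`_i.+1) / 2) + J s t.
  by rewrite s_average // /J (llimit_piecewise ib t_in mid); lra.
exact: congr_mod2D (congr_mod2_on_interval ib mid) (congr_mod2_refl _).
Qed.

End StepFunction.

Section RMod2.
Context {R : realType}.
Implicit Types (s : R -> R) (d : laurent) (l : seq R).

Lemma in_S_jumps_finite {s} : in_S s -> exists l, T_s s `<=` [set` l].
Proof.
case=> [[[a [b_sorted s_const]] _] _ _ _ _].
by exists (breakpoints a) => t [t_int]; exact: jump_mem_breakpoints.
Qed.

Lemma in_S_value_jump {s t} : in_S s -> 0 < t < 1 / 2 ->
  congr_mod2 (s t) (s 0 + J s t).
Proof.
case=> [[[a [b_sorted s_const]] [_ s_cont0]] s_average J_int _ _].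
exact: (congr_mod2_value_jump b_sorted s_const s_cont0 J_int s_average).
Qed.

Lemma r_delta_attained {s d l} : T_s s `<=` [set` l] -> T_sd s d !=set0 ->
  exists t1 t2, [/\ T_sd s d t1, T_sd s d t2 &
                    r_delta s d = `|s t1| + `|J s t2|].
Proof.
move=> Tl [t0 Tt0].
have sup_attained (f : R -> R) :
    exists2 t, T_sd s d t & sup [set f t | t in T_sd s d] = f t.
  have [|_ [t [Tt _] <-]|t Tt ft] :=
    sup_mem_finite [set f t | t in T_sd s d] (map f l).
  - by exists (f t0), t0.
  - by apply: map_f; exact: Tl.
  - by exists t.
rewrite /r_delta; have [t1 T1 ->] := sup_attained (fun t => `|s t|).
have [t2 T2 ->] := sup_attained (fun t => `|J s t|).
by exists t1, t2.
Qed.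

Lemma r_delta_congr_mod2 s d : in_S s -> sym_irred d -> T_sd s d !=set0 ->
  congr_mod2 (r_delta s d) (s 0).
Proof.
move=> sS dsym Tne; have [l Tl] := in_S_jumps_finite sS.
have [t1 [t2 [[[t1_int _] t1_root] [[t2_int _] t2_root] ->]]] :=
  r_delta_attained Tl Tne.
have s_t1 := in_S_value_jump sS t1_int.
case: sS => [[_ [s_int _]] _ J_int _ J_parity].
have abs_s_t1 : congr_mod2 `|s t1| (s 0 + J s t1).
  by apply: congr_mod2_trans (congr_mod2_normr _ (s_int _ _)) s_t1;
    case/andP: t1_int => /ltW -> ->.
have abs_J_t2 : congr_mod2 `|J s t2| (J s t1).
  apply: congr_mod2_trans (congr_mod2_normr _ (J_int _ t2_int)) _.
  exact: J_parity dsym t2_int t1_int t2_root t1_root.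
apply: congr_mod2_trans (congr_mod2D abs_s_t1 abs_J_t2) _.
exact: congr_mod2_add_double (J_int _ t1_int).
Qed.

Lemma r_of_cases {s l} : T_s s `<=` [set` l] ->
  r_of s = s 0 \/
  exists2 d, sym_irred d /\ T_sd s d !=set0 & r_of s = r_delta s d.
Proof.
move=> Tl; rewrite /r_of; set E := _ `|` _.
suff [[d [dsym Tne] <-]|->] : E (sup E); [by right; exists d | by left |].
apply: (sup_mem_finite E (s 0 :: [seq `|s x| + `|J s y| | x <- l, y <- l])).
  by exists (s 0); right.
move=> _ [[d [_ Tne] <-]|->]; last by rewrite /= inE eqxx.
have [t1 [t2 [[T1 _] [T2 _] ->]]] := r_delta_attained Tl Tne.
rewrite /= inE; apply/orP; right.
exact: allpairs_f (Tl _ T1) (Tl _ T2).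
Qed.

End RMod2.

Theorem mainTheorem3 (R : realType) (s : R -> R) :
  in_S s -> congr_mod2 (r_of s) (s 0).
Proof.
move=> sS; have [l Tl] := in_S_jumps_finite sS.
have [->|[d [dsym Tne] ->]] := r_of_cases Tl; first exact: congr_mod2_refl.
exact: r_delta_congr_mod2.
Qed.
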